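(* Let $D$ be an nc-domain, $\mathcal H,\mathcal K$ Hilbert spaces, and $f$ an $\mathcal L(\mathcal H,\mathcal K)$-valued nc-function on $D$. Let $\mathcal V,\mathcal W$ be finite dimensional vector spaces, and let $R$ be a $d$-tuple of linear maps on $\mathcal V$, $T$ a $d$-tuple of linear maps on $\mathcal W$, and $L:\mathcal V\to\mathcal W$ linear. If $R,T\in D^{\mathrm{sss}}$ and $T L=L R$ (i.e. $T^rL=LR^r$ for all $r$), then $f^{\mathrm{sss}}(T)(L\otimes I_{\mathcal H})=(L\otimes I_{\mathcal K})f^{\mathrm{sss}}(R)$.
   Context: An nc-domain $D\subseteq\bigcup_n\mathcal M_n^d$ is a set closed under direct sums and unitary conjugation with each level open. An $\mathcal L(\mathcal H,\mathcal K)$-valued nc-function on $D$ is a map $f$ with $f(x)\in\mathcal L(\mathbb C^n\otimes\mathcal H,\mathbb C^n\otimes\mathcal K)$ for $x\in D\cap\mathcal M_n^d$, $f(x\oplus y)=f(x)\oplus f(y)$, and $f(s^{-1}xs)=(s^{-1}\otimes I_{\mathcal K})f(x)(s\otimes I_{\mathcal H})$ whenever $s$ is invertible and $x,s^{-1}xs\in D$. $D^{\mathrm{sss}}$ is the set of $d$-tuples $T$ of linear maps on some $n$-dimensional vector space $\mathcal V$ for which there is an invertible linear $S:\mathcal V\to\mathbb C^n$ with $STS^{-1}=(ST^1S^{-1},\dots,ST^dS^{-1})\in D\cap\mathcal M_n^d$; for such $T$, $f^{\mathrm{sss}}(T)=(S^{-1}\otimes I_{\mathcal K})f(STS^{-1})(S\otimes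 I_{\mathcal H}):\mathcal V\otimes\mathcal H\to\mathcal V\otimes\mathcal K$ (this is well defined). *)

From HB Require Import structures.
From mathcomp Require Import all_boot all_order all_algebra.
From mathcomp Require Import reals.
From mathcomp Require Import complex.

Set Implicit Arguments.
Unset Strict Implicit.
Unset Printing Implicit Defensive.

Import Order.TTheory GRing.Theory Num.Theory.
Local Open Scope ring_scope.

Section NC.
Variable R : realType.
Local Notation C := R[i].

Definition ipnorm (H : lmodType C) (ip : H -> H -> C) (x : H) : C :=
  sqrtC (ip x x).

Definition is_hilbert (H : lmodType C) (ip : H -> H -> C) : Prop :=
  [/\ (forall (a : C) (x y z : H), ip (a *: x + y) z = a * ip x z + ip y z),
      (forall x y : H, ip y x = (ip x y)^*),
      (forall x : H, 0 <= ip x x),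
      (forall x : H, ip x x = 0 -> x = 0) &
      (forall u : nat -> H,
         (forall e : C, 0 < e -> exists N : nat, forall m n : nat,
            (N <= m)%N -> (N <= n)%N -> ipnorm ip (u m - u n) < e) ->
         exists l : H, forall e : C, 0 < e -> exists N : nat, forall m : nat,
            (N <= m)%N -> ipnorm ip (u m - l) < e)].

(* The Hilbert norm of C^n (x) H = H^n. *)
Definition ampnorm (H : lmodType C) (ip : H -> H -> C) (n : nat)
  (u : {ffun 'I_n -> H}) : C := sqrtC (\sum_i ip (u i) (u i)).

Definition is_bdd_op (H K : lmodType C) (ipH : H -> H -> C) (ipK : K -> K -> C)
  (n : nat) (A : {ffun 'I_n -> H} -> {ffun 'I_n -> K}) : Prop :=
  (forall (a : C) (u v : {ffun 'I_n -> H}), A (a *: u + v) = a *: A u + A v) /\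
  (exists M : C, forall u, ampnorm ipK (A u) <= M * ampnorm ipH u).

(* s (x) I_H for a matrix s acting on column vectors of C^n. *)
Definition mxtens (H : lmodType C) (n : nat) (s : 'M[C]_n)
  (u : {ffun 'I_n -> H}) : {ffun 'I_n -> H} :=
  [ffun i => \sum_j s i j *: u j].

Definition dsum_op (H K : lmodType C) (n m : nat)
  (A : {ffun 'I_n -> H} -> {ffun 'I_n -> K})
  (B : {ffun 'I_m -> H} -> {ffun 'I_m -> K})
  (u : {ffun 'I_(n + m) -> H}) : {ffun 'I_(n + m) -> K} :=
  [ffun i => match split i with
             | inl a => A [ffun k => u (lshift m k)] a
             | inr b => B [ffun k => u (rshift n k)] b
             end].

Definition tuple_dsum (d n m : nat) (x : 'I_d -> 'M[C]_n) (y : 'I_d -> 'M[C]_m)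
  : 'I_d -> 'M[C]_(n + m) := fun r => block_mx (x r) 0 0 (y r).

Definition tuple_conj (d n : nat) (s t : 'M[C]_n) (x : 'I_d -> 'M[C]_n)
  : 'I_d -> 'M[C]_n := fun r => s *m x r *m t.

Definition adjmx (n : nat) (U : 'M[C]_n) : 'M[C]_n := (map_mx (fun z => z^*) U)^T.

Definition unitary (n : nat) (U : 'M[C]_n) : Prop := adjmx U *m U = 1%:M.

Definition level_open (d n : nat) (Dn : ('I_d -> 'M[C]_n) -> Prop) : Prop :=
  forall x, Dn x -> exists2 e : C, 0 < e &
    forall y : 'I_d -> 'M[C]_n,
      (forall r i j, `|y r i j - x r i j| < e) -> Dn y.

Definition nc_domain (d : nat) (D : forall n, ('I_d -> 'M[C]_n) -> Prop) : Prop :=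
  [/\ (forall n m x y, D n x -> D m y -> D (n + m)%N (tuple_dsum x y)),
      (forall n (U : 'M[C]_n) x, unitary U -> D n x -> D n (tuple_conj (adjmx U) U x)) &
      (forall n, level_open (D n))].

Definition nc_function (d : nat) (D : forall n, ('I_d -> 'M[C]_n) -> Prop)
  (H K : lmodType C) (ipH : H -> H -> C) (ipK : K -> K -> C)
  (f : forall n, ('I_d -> 'M[C]_n) -> {ffun 'I_n -> H} -> {ffun 'I_n -> K}) : Prop :=
  [/\ (forall n x, D n x -> is_bdd_op ipH ipK (f n x)),
      (forall n m x y, D n x -> D m y ->
         forall u, f (n + m)%N (tuple_dsum x y) u = dsum_op (f n x) (f m y) u) &
      (forall n (s : 'M[C]_n) x, s \in unitmx -> D n x ->
         D n (tuple_conj (invmx s) s x) ->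
         forall u, f n (tuple_conj (invmx s) s x) u
                   = mxtens (invmx s) (f n x (mxtens s u)))].

(* V (x) H is modelled as H^(dim V) via the basis vbasis {:V} of V:
   the element sum_j b_j (x) u_j is represented by u. *)
Definition vtens (V : vectType C) (H : lmodType C) := {ffun 'I_(\dim {:V}) -> H}.

Definition hom_tens (V W : vectType C) (H : lmodType C) (L : 'Hom(V, W))
  (u : vtens V H) : vtens W H :=
  [ffun i => \sum_j coord (vbasis {:W}) i (L (tnth (vbasis {:V}) j)) *: u j].

(* S (x) I_H for S : V -> C^n, n = dim V (C^n realized as row vectors). *)
Definition to_tens (V : vectType C) (H : lmodType C)
  (S : 'Hom(V, 'rV[C]_(\dim {:V}))) (u : vtens V H) : {ffun 'I_(\dim {:V}) -> H} :=
  [ffun i => \sum_j (S (tnth (vbasis {:V}) j)) 0 i *: u j].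

Definition from_tens (V : vectType C) (H : lmodType C)
  (Si : 'Hom('rV[C]_(\dim {:V}), V)) (u : {ffun 'I_(\dim {:V}) -> H}) : vtens V H :=
  [ffun i => \sum_j coord (vbasis {:V}) i (Si (delta_mx 0 j)) *: u j].

(* S T S^-1 as a d-tuple of (dim V) x (dim V) matrices (acting on columns). *)
Definition sim_tuple (d : nat) (V : vectType C)
  (S : 'Hom(V, 'rV[C]_(\dim {:V}))) (Si : 'Hom('rV[C]_(\dim {:V}), V))
  (T : 'I_d -> 'End(V)) : 'I_d -> 'M[C]_(\dim {:V}) :=
  fun r => \matrix_(i, j) (S (T r (Si (delta_mx 0 j)))) 0 i.

(* S witnesses T \in D^sss : S is an invertible linear map V -> C^(dim V)
   with inverse Si, and S T S^-1 \in D. *)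
Definition sss_witness (d : nat) (D : forall n, ('I_d -> 'M[C]_n) -> Prop)
  (V : vectType C) (T : 'I_d -> 'End(V))
  (S : 'Hom(V, 'rV[C]_(\dim {:V}))) (Si : 'Hom('rV[C]_(\dim {:V}), V)) : Prop :=
  [/\ cancel S Si, cancel Si S & D (\dim {:V}) (sim_tuple S Si T)].

Definition f_sss (d : nat) (H K : lmodType C)
  (f : forall n, ('I_d -> 'M[C]_n) -> {ffun 'I_n -> H} -> {ffun 'I_n -> K})
  (V : vectType C) (T : 'I_d -> 'End(V))
  (S : 'Hom(V, 'rV[C]_(\dim {:V}))) (Si : 'Hom('rV[C]_(\dim {:V}), V))
  (u : vtens V H) : vtens V K :=
  from_tens Si (f (\dim {:V}) (sim_tuple S Si T) (to_tens S u)).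

End NC.

(* If a matrix P intertwines X and Y (Y P = P X), the block matrix
   s = [[1, 0], [P, 1]] commutes with X (+) Y, so similarity invariance of f
   makes f(X (+) Y) commute with s (x) I; the lower-left block of that identity
   is (P (x) I) f(X) = f(Y) (P (x) I).  In the coordinates given by the
   witnesses, f^sss(R) and f^sss(T) are f(X), f(Y) for X = S_R R S_R^-1 and
   Y = S_T T S_T^-1, which are intertwined by P = S_T L S_R^-1. *)

From HB Require Import structures.
From mathcomp Require Import all_boot all_order all_algebra.
From mathcomp Require Import reals.
From mathcomp Require Import complex.
From Stdlib Require Import FunctionalExtensionality.
Import Order.TTheory GRing.Theory Num.Theory.
Local Open Scope ring_scope.
Set Implicit Arguments.
Unset Strict Implicit.
Import passmx.

Section MatrixTensor.
Variables (F : pzRingType) (H : lmodType F).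

Definition mx_tens m n (A : 'M[F]_(m, n)) (u : {ffun 'I_n -> H}) : {ffun 'I_m -> H} :=
  [ffun i => \sum_j A i j *: u j].

Lemma mx_tensM m n p (A : 'M[F]_(m, n)) (B : 'M[F]_(n, p)) u :
  mx_tens A (mx_tens B u) = mx_tens (A *m B) u.
Proof.
apply/ffunP => i; rewrite !ffunE.
under eq_bigr => j _ do rewrite ffunE scaler_sumr.
rewrite exchange_big /=; apply: eq_bigr => k _.
by rewrite mxE scaler_suml; apply: eq_bigr => j _; rewrite scalerA.
Qed.

Lemma mx_tens1 n (u : {ffun 'I_n -> H}) : mx_tens 1%:M u = u.
Proof.
apply/ffunP => i; rewrite ffunE (bigD1 i) //= big1 => [|j /negbTE ji].
  by rewrite mxE eqxx scale1r addr0.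
by rewrite mxE eq_sym ji scale0r.
Qed.

Definition lsubf n m (w : {ffun 'I_(n + m) -> H}) : {ffun 'I_n -> H} :=
  [ffun k => w (lshift m k)].

Definition rsubf n m (w : {ffun 'I_(n + m) -> H}) : {ffun 'I_m -> H} :=
  [ffun k => w (rshift n k)].

Definition catf n m (u : {ffun 'I_n -> H}) (v : {ffun 'I_m -> H}) :
  {ffun 'I_(n + m) -> H} :=
  [ffun i => match split i with inl a => u a | inr b => v b end].

Lemma lsubf_cat n m (u : {ffun 'I_n -> H}) (v : {ffun 'I_m -> H}) :
  lsubf (catf u v) = u.
Proof. by apply/ffunP => k; rewrite !ffunE (unsplitK (inl k)). Qed.

Lemma rsubf_cat n m (u : {ffun 'I_n -> H}) (v : {ffun 'I_m -> H}) :
  rsubf (catf u v) = v.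
Proof. by apply/ffunP => k; rewrite !ffunE (unsplitK (inr k)). Qed.

Lemma rsubf_mx_tens_block n1 n2 m1 m2 (A : 'M[F]_(m1, n1)) (B : 'M[F]_(m1, n2))
    (C : 'M[F]_(m2, n1)) (D : 'M[F]_(m2, n2)) (w : {ffun 'I_(n1 + n2) -> H}) :
  rsubf (mx_tens (block_mx A B C D) w) = mx_tens C (lsubf w) + mx_tens D (rsubf w).
Proof.
apply/ffunP => k; rewrite !ffunE big_split_ord /=.
by congr (_ + _); apply: eq_bigr => j _; rewrite ?block_mxEdl ?block_mxEdr !ffunE.
Qed.

End MatrixTensor.

Section ColumnMatrix.
Variable F : comPzRingType.

(* The matrix of [g] in the column convention of [mxtens] and [sim_tuple]. *)
Definition colmx m n (g : 'rV[F]_m -> 'rV[F]_n) : 'M[F]_(n, m) := (lin1_mx g)^T.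

Lemma colmxE m n (g : 'rV[F]_m -> 'rV[F]_n) i j : colmx g i j = g (delta_mx 0 j) 0 i.
Proof. by rewrite !mxE. Qed.

Lemma eq_colmx m n (g h : 'rV[F]_m -> 'rV[F]_n) : g =1 h -> colmx g = colmx h.
Proof. by move=> gh; apply/matrixP => i j; rewrite !colmxE gh. Qed.

Lemma colmx_comp m n p (g : {linear 'rV[F]_n -> 'rV[F]_p}) (h : 'rV[F]_m -> 'rV[F]_n) :
  colmx (g \o h) = colmx g *m colmx h.
Proof.
rewrite /colmx -trmx_mul; congr trmx; apply/row_matrixP => i.
have row_lin1 q (k : 'I_m) (f : 'rV[F]_m -> 'rV[F]_q) :
    row k (lin1_mx f) = f (delta_mx 0 k).
  by apply/rowP => j; rewrite !mxE.
by rewrite row_mul !row_lin1 mul_rV_lin1.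
Qed.

End ColumnMatrix.

Section Coordinates.
Variable R : realType.
Local Notation C := R[i].

Lemma vecof_vbasis (V : vectType C) j :
  vecof (vbasis {:V}) (delta_mx 0 j) = tnth (vbasis {:V}) j.
Proof. by rewrite vecof_delta (tnth_nth 0). Qed.

Lemma hom_tensE (V W : vectType C) (H : lmodType C) (L : 'Hom(V, W)) (u : vtens V H) :
  hom_tens L u = mx_tens (colmx (rVof (vbasis {:W}) \o L \o vecof (vbasis {:V}))) u.
Proof.
apply/ffunP => i; rewrite !ffunE; apply: eq_bigr => j _.
by rewrite colmxE /= vecof_vbasis mxE.
Qed.

Lemma to_tensE (V : vectType C) (H : lmodType C) (S : 'Hom(V, 'rV[C]_(\dim {:V})))
    (u : vtens V H) :
  to_tens S u = mx_tens (colmx (S \o vecof (vbasis {:V}))) u.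
Proof.
by apply/ffunP => i; rewrite !ffunE; apply: eq_bigr => j _; rewrite colmxE /= vecof_vbasis.
Qed.

Lemma from_tensE (V : vectType C) (H : lmodType C) (Si : 'Hom('rV[C]_(\dim {:V}), V))
    (u : {ffun 'I_(\dim {:V}) -> H}) :
  from_tens Si u = mx_tens (colmx (rVof (vbasis {:V}) \o Si)) u.
Proof. by apply/ffunP => i; rewrite !ffunE; apply: eq_bigr => j _; rewrite colmxE mxE. Qed.

Lemma sim_tupleE d (V : vectType C) (S : 'Hom(V, 'rV[C]_(\dim {:V})))
    (Si : 'Hom('rV[C]_(\dim {:V}), V)) (T : 'I_d -> 'End(V)) r :
  sim_tuple S Si T r = colmx (S \o T r \o Si).
Proof. by apply/matrixP => i j; rewrite colmxE mxE. Qed.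

End Coordinates.

Section Intertwining.
Variables (R : realType) (d : nat) (D : forall n, ('I_d -> 'M[R[i]]_n) -> Prop).
Variables (H K : lmodType R[i]) (ipH : H -> H -> R[i]) (ipK : K -> K -> R[i]).
Variable f : forall n, ('I_d -> 'M[R[i]]_n) -> {ffun 'I_n -> H} -> {ffun 'I_n -> K}.
Arguments D : clear implicits.
Arguments f : clear implicits.
Hypothesis f_nc : nc_function D ipH ipK f.

Lemma mxtensE (M : lmodType R[i]) n (s : 'M[R[i]]_n) (u : {ffun 'I_n -> M}) :
  mxtens s u = mx_tens s u.
Proof. by []. Qed.

Lemma nc_function0 n x : D n x -> f n x 0 = 0.
Proof.
case: f_nc => f_bdd _ _ /f_bdd [f_lin _].
have := f_lin 1 0 0; rewrite !scale1r addr0 => f00.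
by apply: (addrI (f n x 0)); rewrite addr0 -f00.
Qed.

Lemma lsubf_nc_dsum n m x y u : D n x -> D m y ->
  lsubf (f (n + m) (tuple_dsum x y) u) = f n x (lsubf u).
Proof.
case: f_nc => _ f_dsum _ Dx Dy.
by apply/ffunP => k; rewrite f_dsum // !ffunE (unsplitK (inl k)).
Qed.

Lemma rsubf_nc_dsum n m x y u : D n x -> D m y ->
  rsubf (f (n + m) (tuple_dsum x y) u) = f m y (rsubf u).
Proof.
case: f_nc => _ f_dsum _ Dx Dy.
by apply/ffunP => k; rewrite f_dsum // !ffunE (unsplitK (inr k)).
Qed.

Lemma nc_function_commute n (s : 'M[R[i]]_n) x : s \in unitmx -> D n x ->
  tuple_conj (invmx s) s x = x ->
  forall u, mx_tens s (f n x u) = f n x (mx_tens s u).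
Proof.
case: f_nc => _ _ f_sim s_unit Dx sx u.
have := f_sim n s x s_unit Dx; rewrite sx => /(_ Dx u) ->.
by rewrite !mxtensE mx_tensM mulmxV // mx_tens1.
Qed.

Hypothesis D_dsum : forall n m x y, D n x -> D m y -> D (n + m)%N (tuple_dsum x y).

Lemma nc_function_intertwine m n (X : 'I_d -> 'M[R[i]]_m) (Y : 'I_d -> 'M[R[i]]_n)
    (P : 'M[R[i]]_(n, m)) :
  D m X -> D n Y -> (forall r, Y r *m P = P *m X r) ->
  forall v, mx_tens P (f m X v) = f n Y (mx_tens P v).
Proof.
move=> DX DY PXY v.
set s := block_mx 1%:M 0 P 1%:M.
have s_unit : s \in unitmx.
  have sV : s *m block_mx 1%:M 0 (- P) 1%:M = 1%:M.
    rewrite mulmx_block !mul1mx !mulmx1 !mul0mx !mulmx0 !addr0 add0r subrr.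
    by rewrite -scalar_mx_block.
  by case: (mulmx1_unit sV).
set x := tuple_dsum X Y.
have s_x : tuple_conj (invmx s) s x = x.
  apply: functional_extensionality => r; rewrite /tuple_conj -mulmxA.
  have -> : x r *m s = s *m x r.
    rewrite /x /tuple_dsum /s !mulmx_block.
    by rewrite !mul1mx !mulmx1 !mul0mx !mulmx0 !addr0 !add0r PXY.
  by rewrite mulKmx.
have := congr1 (fun w => rsubf w) (nc_function_commute s_unit (D_dsum DX DY) s_x (catf v 0)).
rewrite rsubf_nc_dsum // !rsubf_mx_tens_block lsubf_nc_dsum // rsubf_nc_dsum //.
by rewrite lsubf_cat rsubf_cat nc_function0 // !mx_tens1 !addr0.
Qed.

End Intertwining.

Theorem lemma3p17 (R : realType) (d : nat)
  (D : forall n, ('I_d -> 'M[R[i]]_n) -> Prop)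
  (H K : lmodType R[i]) (ipH : H -> H -> R[i]) (ipK : K -> K -> R[i])
  (f : forall n, ('I_d -> 'M[R[i]]_n) -> {ffun 'I_n -> H} -> {ffun 'I_n -> K})
  (V W : vectType R[i]) (Rt : 'I_d -> 'End(V)) (T : 'I_d -> 'End(W))
  (L : 'Hom(V, W))
  (SR : 'Hom(V, 'rV[R[i]]_(\dim {:V}))) (SRi : 'Hom('rV[R[i]]_(\dim {:V}), V))
  (ST : 'Hom(W, 'rV[R[i]]_(\dim {:W}))) (STi : 'Hom('rV[R[i]]_(\dim {:W}), W)) :
  nc_domain D -> is_hilbert ipH -> is_hilbert ipK ->
  nc_function D ipH ipK f ->
  sss_witness D Rt SR SRi -> sss_witness D T ST STi ->
  (forall r, (T r \o L = L \o Rt r)%VF) ->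
  forall u : vtens V H,
    f_sss f T ST STi (hom_tens L u) = hom_tens L (f_sss f Rt SR SRi u).
Proof.
move=> [D_dsum _ _] _ _ f_nc [SRK _ DR] [STK _ DT] TL u.
have TLE r v : T r (L v) = L (Rt r v) by rewrite -!comp_lfunE TL.
pose eV := vbasis {:V}; pose eW := vbasis {:W}.
set P := colmx (ST \o L \o SRi).
have P_intertwines r : sim_tuple ST STi T r *m P = P *m sim_tuple SR SRi Rt r.
  rewrite !sim_tupleE -!colmx_comp; apply: eq_colmx => v /=.
  by rewrite STK SRK TLE.
have ST_L : colmx (ST \o vecof eW) *m colmx (rVof eW \o L \o vecof eV)
          = P *m colmx (SR \o vecof eV).
  rewrite -!colmx_comp; apply: eq_colmx => v /=.
  by rewrite rVofK ?vbasisP // SRK.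
have STi_P : colmx (rVof eW \o STi) *m P
          = colmx (rVof eW \o L \o vecof eV) *m colmx (rVof eV \o SRi).
  rewrite -!colmx_comp; apply: eq_colmx => v /=.
  by rewrite STK rVofK ?vbasisP.
rewrite /f_sss !to_tensE !from_tensE !hom_tensE -/eV -/eW.
rewrite mx_tensM ST_L -mx_tensM.
rewrite -(nc_function_intertwine f_nc D_dsum DR DT P_intertwines).
by rewrite !mx_tensM STi_P.
Qed.
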